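(* Let $S_1,S_2$ be numerical semigroups and $a_1,a_2$ coprime positive integers with $a_2\in S_1$ and $a_1\in S_2$, and let $S=a_1S_1+a_2S_2$. For $i=1,2$ put $Q_i(x)=\mathrm P_S(x)/\mathrm P_{S_i}(x^{a_i})$. Then $Q_i(0)=1$, $Q_i(x)$ is a monic polynomial, and its nonzero coefficients alternate between $1$ and $-1$.
   Context: A numerical semigroup is a submonoid of $(\mathbb N,+)$ with finite complement in $\mathbb N$; $aA=\{ax:x\in A\}$, $A+B=\{x+y:x\in A,y\in B\}$. For a numerical semigroup $T$, $\mathrm P_T(x)=(1-x)\sum_{t\in T}x^t$. (In the paper, $S$ is called the gluing $a_1S_1+_{a_1a_2}a_2S_2$.) *)

From mathcomp Require Import all_boot all_order all_algebra.
Set Implicit Arguments. Unset Strict Implicit. Unset Printing Implicit Defensive.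
Import GRing.Theory Num.Theory.
Local Open Scope ring_scope.

Definition numerical_semigroup (T : pred nat) : Prop :=
  [/\ T 0%N,
      (forall x y, T x -> T y -> T (x + y)%N)
    & exists N : nat, forall n, (N <= n)%N -> T n].

(* a1 A + a2 B = { a1 x + a2 y : x in A, y in B }.  Since a1 > 0 in the
   use below, any witness x satisfies x <= n, so the search is bounded. *)
Definition gluing (a1 : nat) (A : pred nat) (a2 : nat) (B : pred nat) : pred nat :=
  fun n => [exists x : 'I_n.+1, [exists y : 'I_n.+1,
             [&& A x, B y & (a1 * x + a2 * y)%N == n]]].

Definition pseries := nat -> int.

(* P_T(x) = (1 - x) * sum_{t in T} x^t, coefficientwise:
   coefficient of x^k is [k in T] - [k-1 in T]. *)
Definition PT (T : pred nat) : pseries :=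
  fun k => (T k)%:Z - (if k is k'.+1 then (T k')%:Z else 0).

(* f(x^a) for a > 0. *)
Definition subst_pow (a : nat) (f : pseries) : pseries :=
  fun k => if (a %| k)%N then f (k %/ a)%N else 0.

Definition polyXser (q : {poly int}) (f : pseries) : pseries :=
  fun n => \sum_(i < n.+1) q`_i * f (n - i)%N.

Definition alternating_coefs (q : {poly int}) : Prop :=
  (forall i, q`_i != 0 -> q`_i = 1 \/ q`_i = -1) /\
  (forall i j, (i < j)%N -> q`_i != 0 -> q`_j != 0 ->
     (forall k, (i < k < j)%N -> q`_k = 0) -> q`_j = - q`_i).

(* Write a = a1, b = a2, S = a S1 + b S2 and T = a N + b S2; T has finite
   complement since gcd(a, b) = 1.  Every element of S is j + a s with s in S1
   and j in the Apery set T \ (a + T) (here b in S1 is used), and j is unique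
   because the Apery set meets each residue class modulo a exactly once.  Hence
   H_S(x) = H_Ap(x) H_S1(x^a) and H_Ap(x) = (1 - x^a) H_T(x), which gives
   P_S(x) = P_T(x) P_S1(x^a): the quotient is P_T.  Its coefficients are
   [k in T] - [k - 1 in T], so P_T is a polynomial whose nonzero coefficients
   are 1 and -1 alternately, starting with P_T(0) = 1 and ending with +1.  The
   other quotient follows by symmetry.  Power series identities are checked on
   truncations modulo x^N, where the ring laws of polynomials are available. *)

From mathcomp Require Import all_boot all_order all_algebra zify.
From Stdlib Require Import FunctionalExtensionality.
Import GRing.Theory Num.Theory.

Lemma gluingP {a1 a2 : nat} {A B : pred nat} {n : nat} : 0 < a1 -> 0 < a2 ->
  reflect (exists x y, [/\ A x, B y & a1 * x + a2 * y = n]) (gluing a1 A a2 B n).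
Proof.
move=> a1_gt0 a2_gt0; apply: (iffP existsP).
  by move=> [x /existsP [y /and3P [Ax By /eqP <-]]]; exists x, y.
move=> [x [y [Ax By <-]]].
have lt_x : x < (a1 * x + a2 * y).+1 by rewrite ltnS; nia.
have lt_y : y < (a1 * x + a2 * y).+1 by rewrite ltnS; nia.
by exists (Ordinal lt_x); apply/existsP; exists (Ordinal lt_y); rewrite /= Ax By eqxx.
Qed.

Lemma gluingC {a1 a2 : nat} {A B : pred nat} : 0 < a1 -> 0 < a2 ->
  gluing a1 A a2 B =1 gluing a2 B a1 A.
Proof.
move=> a1_gt0 a2_gt0 n.
by apply/(gluingP a1_gt0 a2_gt0)/(gluingP a2_gt0 a1_gt0);
  move=> [x [y [Ax By <-]]]; exists y, x; rewrite addnC.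
Qed.

Lemma ns_muln {S : pred nat} {x : nat} (k : nat) :
  numerical_semigroup S -> S x -> S (x * k).
Proof.
by move=> [S0 SD _] Sx; elim: k => [|k IHk]; rewrite ?muln0 // mulnS SD.
Qed.

Lemma coprime_mod_inv {a b : nat} : 0 < b -> coprime a b -> exists u, b * u = 1 %[mod a].
Proof.
move=> b_gt0 cop_ab; case: (egcdnP a b_gt0) => km kn def_km _.
by exists km; rewrite mulnC def_km gcdnC (eqP cop_ab) modnMDl.
Qed.

Definition dilate (a : nat) (T : pred nat) : pred nat :=
  fun i => (a %| i) && T (i %/ a).

Definition apery (a : nat) (T : pred nat) : pred nat :=
  fun j => T j && ~~ ((a <= j) && T (j - a)).

Section Apery.

Context {a : nat} {T : pred nat}.
Hypotheses (a_gt0 : 0 < a) (T_addn : forall m, T m -> T (m + a)).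

Lemma mem_addMn m k : T m -> T (m + a * k).
Proof. by move=> Tm; elim: k => [|k IHk]; rewrite ?muln0 ?addn0 // mulnSr addnA T_addn. Qed.

Lemma apery_eq_mod {j j' : nat} : apery a T j -> apery a T j' -> j = j' %[mod a] -> j = j'.
Proof.
wlog le_jj' : j j' / j <= j'.
  move=> wlog_le Aj Aj' eq_jj'.
  by case: (leqP j j') => [|/ltnW] le; [exact: wlog_le | apply/esym/wlog_le].
move=> /andP [Tj _] /andP [_ nTj'a] /esym/eqP; rewrite eqn_mod_dvd //.
move=> /dvdnP [[|k] def_k]; first by apply/eqP; rewrite eqn_leq le_jj' -subn_eq0 def_k.
case/negP: nTj'a; have -> : j' - a = j + a * k by nia.
by rewrite mem_addMn // andbT; nia.
Qed.

Lemma apery_descent {m : nat} : T m -> exists2 k, a * k <= m & apery a T (m - a * k).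
Proof.
elim/ltn_ind: m => m IHm Tm.
case Am: (apery a T m); first by exists 0; rewrite ?muln0 ?subn0.
move: Am; rewrite /apery Tm /= => /negbFE /andP [le_am Tma].
have [|k le_akm Ak] := IHm (m - a) _ Tma; first by rewrite ltn_subrL a_gt0 (leq_trans a_gt0).
by exists k.+1; rewrite mulnSr; [lia | rewrite addnC subnDA].
Qed.

End Apery.

Section GluingDecomposition.

Context {a b : nat} {S2 : pred nat}.
Hypotheses (a_gt0 : 0 < a) (b_gt0 : 0 < b) (coprime_ab : coprime a b).
Hypothesis S2_ns : numerical_semigroup S2.

Local Notation T := (gluing a (fun _ => true) b S2).

Lemma gluingN_addn m : T m -> T (m + a).
Proof.
move=> /(gluingP a_gt0 b_gt0) [x [y [_ S2y <-]]].
apply/(gluingP a_gt0 b_gt0); exists x.+1, y.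
by rewrite mulnSr addnAC.
Qed.

Lemma gluingN0 : T 0.
Proof.
apply/(gluingP a_gt0 b_gt0); exists 0, 0.
by case: S2_ns; rewrite !muln0.
Qed.

Lemma gluingN_cofinite : exists C, forall m, C <= m -> T m.
Proof.
have [_ _ [c S2c]] := S2_ns; have [u bu1] := coprime_mod_inv b_gt0 coprime_ab.
exists (b * (c * a + a)) => m le_Cm.
(* [y >= c] and [b * y = m] modulo [a], since [u] inverts [b] modulo [a]. *)
pose y := c * a + (m * u) %% a.
have le_bym : b * y <= m.
  by apply: leq_trans le_Cm; rewrite leq_mul2l leq_add2l ltnW ?ltn_mod ?orbT.
have eq_bym : b * y = m %[mod a].
  rewrite mulnDr mulnA modnMDl modnMmr mulnA (mulnC b m) -mulnA.
  by rewrite -modnMmr bu1 modnMmr muln1.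
apply/(gluingP a_gt0 b_gt0); exists ((m - b * y) %/ a), y; split=> //.
  by apply: S2c; rewrite /y; nia.
by rewrite mulnC divnK ?subnK // -eqn_mod_dvd // eq_bym.
Qed.

Lemma apery_gluingN {j : nat} : apery a T j -> exists2 y, S2 y & j = b * y.
Proof.
move=> /andP [/(gluingP a_gt0 b_gt0) [[|x] [y [_ S2y <-]]] nTja].
  by exists y; rewrite ?muln0.
case/negP: nTja; rewrite mulnS -addnA leq_addr addKn /=.
by apply/(gluingP a_gt0 b_gt0); exists x, y.
Qed.

Context {S1 : pred nat}.
Hypotheses (S1_ns : numerical_semigroup S1) (S1b : S1 b).

Local Notation S := (gluing a S1 b S2).

Lemma gluing_apery_decomp {n : nat} : S n ->
  exists j, [/\ j <= n, apery a T j & dilate a S1 (n - j)].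
Proof.
move=> /(gluingP a_gt0 b_gt0) [x [y [S1x S2y <-]]].
have Tby : T (b * y).
  by apply/(gluingP a_gt0 b_gt0); exists 0, y; rewrite muln0.
have [k le_akby Aj] := apery_descent a_gt0 Tby.
set j := b * y - a * k in Aj *.
(* [j = b * y'] and [a * k = b * (y - y')], so [a] divides [y - y'] and
   [n - j] is [a] times an element of [S1]. *)
have [y' S2y' def_j] := apery_gluingN Aj.
have le_y'y : y' <= y by rewrite -(leq_pmul2l b_gt0) -def_j leq_subr.
have eq_ak : a * k = b * (y - y') by rewrite mulnBr -def_j /j; lia.
have /dvdnP [l def_l] : a %| y - y'.
  by rewrite -(Gauss_dvdr _ coprime_ab) -eq_ak dvdn_mulr.
have eq_nj : a * x + b * y - j = a * (x + b * l).
  by rewrite mulnDr mulnCA [a * l]mulnC -def_l -eq_ak /j; lia.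
exists j; split=> //; first by rewrite /j (leq_trans (leq_subr _ _)) ?leq_addl.
have [_ S1D _] := S1_ns.
by rewrite /dilate eq_nj dvdn_mulr //= mulKn // S1D // (ns_muln _ S1_ns).
Qed.

Lemma gluing_of_apery {n j : nat} : j <= n -> apery a T j -> dilate a S1 (n - j) -> S n.
Proof.
move=> le_jn /apery_gluingN [y S2y def_j] /andP [dvd_a S1q]; subst j.
apply/(gluingP a_gt0 b_gt0); exists ((n - b * y) %/ a), y.
by split=> //; rewrite mulnC divnK // subnK.
Qed.

Lemma apery_dilate_uniq {n j j' : nat} : j <= n -> j' <= n ->
  apery a T j -> dilate a S1 (n - j) -> apery a T j' -> dilate a S1 (n - j') ->
  j = j'.
Proof.
move=> le_jn le_j'n Aj /andP [dvd_j _] Aj' /andP [dvd_j' _].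
have eq_mod k : k <= n -> a %| n - k -> k = n %[mod a].
  by move=> le_kn dvd_k; apply/esym/eqP; rewrite eqn_mod_dvd.
by apply: (apery_eq_mod a_gt0 gluingN_addn Aj Aj'); rewrite (eq_mod j) // (eq_mod j').
Qed.

End GluingDecomposition.

Local Open Scope ring_scope.

Lemma eq_PT (T T' : pred nat) : T =1 T' -> PT T = PT T'.
Proof. by move=> eqT; apply: functional_extensionality => -[|n]; rewrite /PT !eqT. Qed.

Lemma PTS_eq0 (T : pred nat) i : (PT T i.+1 == 0) = (T i.+1 == T i).
Proof. by rewrite /PT subr_eq0; case: (T i.+1); case: (T i). Qed.

Lemma PT_neq0 {T : pred nat} {i : nat} : PT T i != 0 -> PT T i = if T i then 1 else -1.
Proof. by rewrite /PT; case: i => [|i]; case: (T _); rewrite //=; case: (T _). Qed.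

Lemma PT_const (T : pred nat) {i j : nat} : (i <= j)%N ->
  (forall k, (i < k <= j)%N -> PT T k = 0) -> T j = T i.
Proof.
elim: j => [|j IHj]; first by rewrite leqn0 => /eqP ->.
rewrite leq_eqVlt => /predU1P [-> // | lt_ij] PT0.
have := PT0 j.+1; rewrite lt_ij leqnn => /(_ isT) /eqP; rewrite PTS_eq0 => /eqP ->.
by apply: IHj => // k /andP [ik kj]; apply: PT0; rewrite ik leqW.
Qed.

Lemma PT_alternating (T : pred nat) (q : {poly int}) :
  (forall i, q`_i = PT T i) -> alternating_coefs q.
Proof.
move=> qE; split=> [i | i j lt_ij]; rewrite !qE.
  by move/PT_neq0 ->; case: (T i); [left | right].
move=> /PT_neq0 -> + zero; case: j lt_ij zero => // j le_ij zero.
move=> nz; rewrite (PT_neq0 nz); move: nz; rewrite PTS_eq0.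
have -> : T j = T i.
  apply: (PT_const T (le_ij : (i <= j)%N)) => k /andP [ik kj].
  by rewrite -qE zero // ik ltnS.
by case: (T i); case: (T j.+1).
Qed.

Lemma PT_polynomial (T : pred nat) C : T 0%N -> (forall n, (C <= n)%N -> T n) ->
  exists q : {poly int}, [/\ forall i, q`_i = PT T i, q`_0 = 1 & q \is monic].
Proof.
move=> T0 T_cofinite; pose q := \poly_(i < C.+1) PT T i.
have qE i : q`_i = PT T i.
  rewrite coef_poly; case: ltnP => // Ci; case: i Ci => [//|i] Ci.
  by apply/esym/eqP; rewrite PTS_eq0 !T_cofinite // ltnW.
have q0 : q`_0 = 1 by rewrite qE /PT T0.
exists q; split=> //; set s := (size q).-1.
have Ts : T s.
  rewrite -(PT_const T (leq_maxl s C)) ?T_cofinite ?leq_maxr // => k /andP [sk _].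
  by rewrite -qE nth_default // (leq_trans (leqSpred _)).
have : lead_coef q != 0 by rewrite lead_coef_eq0; apply: contra_eq_neq q0 => ->; rewrite coef0.
by rewrite monicE lead_coefE qE => /PT_neq0 ->; rewrite Ts.
Qed.

Lemma take_polyMr (R : nzSemiRingType) N (p r : {poly R}) :
  take_poly N (p * take_poly N r) = take_poly N (p * r).
Proof.
apply/polyP => i; rewrite !coef_take_poly; case: ltnP => // lt_iN.
rewrite !coefM; apply: eq_bigr => j _.
by rewrite coef_take_poly (leq_ltn_trans (leq_subr _ _) lt_iN).
Qed.

Lemma take_polyMl (R : nzSemiRingType) N (p r : {poly R}) :
  take_poly N (take_poly N p * r) = take_poly N (p * r).
Proof.
apply/polyP => i; rewrite !coef_take_poly; case: ltnP => // lt_iN.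
rewrite !coefM; apply: eq_bigr => j _.
by rewrite coef_take_poly (leq_ltn_trans _ lt_iN) // -ltnS.
Qed.

Lemma coef_mul1BXn (R : nzRingType) a (p : {poly R}) i :
  ((1 - 'X^a) * p)`_i = p`_i - (if (a <= i)%N then p`_(i - a) else 0).
Proof. by rewrite mulrBl mul1r coefB -commr_polyXn coefMXn ltnNge; case: leqP. Qed.

Definition ind (T : pred nat) : pseries := fun n => (T n)%:Z.

Definition mul1BXn (a : nat) (f : pseries) : pseries :=
  fun n => f n - (if (a <= n)%N then f (n - a)%N else 0).

Definition trunc (N : nat) (f : pseries) : {poly int} := \poly_(i < N) f i.

Lemma coef_trunc N f i : (trunc N f)`_i = if (i < N)%N then f i else 0.
Proof. exact: coef_poly. Qed.

Lemma eq_trunc {N : nat} {f g : pseries} : f =1 g -> trunc N f = trunc N g.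
Proof. by move=> eq_fg; apply: eq_poly => i _. Qed.

Lemma take_mul1BXn_trunc N a f :
  take_poly N ((1 - 'X^a) * trunc N f) = trunc N (mul1BXn a f).
Proof.
apply/polyP => i; rewrite coef_take_poly coef_trunc; case: ifP => // lt_iN.
by rewrite coef_mul1BXn !coef_trunc lt_iN (leq_ltn_trans (leq_subr _ _) lt_iN).
Qed.

Lemma coef_truncM N f g n : (n < N)%N ->
  (trunc N f * trunc N g)`_n = \sum_(j < n.+1) f j * g (n - j)%N.
Proof.
move=> lt_nN; rewrite coefM; apply: eq_bigr => j _.
rewrite !coef_trunc (leq_ltn_trans (leq_subr _ _) lt_nN).
by rewrite (leq_ltn_trans _ lt_nN) // -ltnS.
Qed.

Lemma polyXserE q f n : polyXser q f n = (q * trunc n.+1 f)`_n.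
Proof.
rewrite coefM; apply: eq_bigr => j _.
by rewrite coef_trunc ltnS leq_subr.
Qed.

Lemma PT_mul1BXn T : PT T =1 mul1BXn 1 (ind T).
Proof. by case=> [|n]; rewrite /PT /mul1BXn /ind //= subn1. Qed.

Lemma subst_pow_PT a T : (0 < a)%N ->
  subst_pow a (PT T) =1 mul1BXn a (ind (dilate a T)).
Proof.
move=> a_gt0 i; rewrite /subst_pow /mul1BXn /ind /dilate.
have [/dvdnP [[|m] ->] | ndvd] := boolP (a %| i)%N.
- by rewrite mul0n div0n leqNgt a_gt0 /PT /= !subr0.
- by rewrite !mulnK // mulSn leq_addr addKn mulnK // dvdn_mull.
case: leqP => [le_ai|_]; last by rewrite subr0.
have -> : (a %| i - a)%N = (a %| i)%N.
  by rewrite -{2}(subnK le_ai) dvdn_addl.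
by rewrite (negbTE ndvd).
Qed.

Lemma mul1BXn_apery {a : nat} {T : pred nat} : (forall m, T m -> T (m + a)%N) ->
  mul1BXn a (ind T) =1 ind (apery a T).
Proof.
move=> T_addn i; rewrite /mul1BXn /ind /apery.
case: leqP => [le_ai|_]; last by rewrite subr0 andbT.
case Tia: (T (i - a)%N); last by rewrite subr0 andbT.
by have -> : T i by rewrite -(subnK le_ai) T_addn.
Qed.

Section GluingSeries.

Variables (a b : nat) (S1 S2 : pred nat).
Hypotheses (a_gt0 : (0 < a)%N) (b_gt0 : (0 < b)%N) (coprime_ab : coprime a b).
Hypotheses (S1_ns : numerical_semigroup S1) (S2_ns : numerical_semigroup S2).
Hypothesis S1b : S1 b.

Local Notation S := (gluing a S1 b S2).
Local Notation T := (gluing a (fun _ => true) b S2).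

Lemma take_trunc_apery_dilate N :
  take_poly N (trunc N (ind (apery a T)) * trunc N (ind (dilate a S1))) = trunc N (ind S).
Proof.
apply/polyP => n; rewrite coef_take_poly coef_trunc; case: ltnP => // lt_nN.
rewrite coef_truncM //.
pose P (j : 'I_n.+1) := apery a T j && dilate a S1 (n - j)%N.
rewrite (eq_bigr (fun j => if P j then 1 else 0)) => [|j _]; last first.
  by rewrite /ind /P; case: (apery a T j); case: (dilate a S1 (n - j)%N).
rewrite -big_mkcond /ind; have [Sn | nSn] := boolP (S n).
  have [j0 [le_j0n Aj0 Dj0]] := gluing_apery_decomp a_gt0 b_gt0 coprime_ab S1_ns S1b Sn.
  rewrite (big_pred1 (Ordinal (le_j0n : (j0 < n.+1)%N))) // => j.
  apply/andP/eqP => [[Aj Dj] | ->] //; apply: val_inj.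
  exact: (apery_dilate_uniq a_gt0 b_gt0 (leq_ord j) le_j0n Aj Dj Aj0 Dj0).
rewrite big_pred0 // => j; apply/negbTE/andP => [[Aj Dj]].
by case/negP: nSn; exact: (gluing_of_apery a_gt0 b_gt0 (leq_ord j) Aj Dj).
Qed.

Lemma take_poly_PT_gluing N {q : {poly int}} : (forall i, q`_i = PT T i) ->
  take_poly N (q * trunc N (subst_pow a (PT S1))) = trunc N (PT S).
Proof.
move=> qE; rewrite (eq_trunc (subst_pow_PT _ _ a_gt0)) -take_mul1BXn_trunc.
rewrite take_polyMr -take_polyMl.
have -> : take_poly N q = take_poly N ((1 - 'X^1) * trunc N (ind T)).
  apply/polyP => i; rewrite take_mul1BXn_trunc coef_take_poly coef_trunc qE.
  by rewrite PT_mul1BXn.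
rewrite take_polyMl -mulrA [trunc N (ind T) * _]mulrCA.
rewrite [(1 - 'X^a) * _]mulrA -take_polyMr -(take_polyMl _ N ((1 - 'X^a) * _)).
rewrite take_mul1BXn_trunc (eq_trunc (mul1BXn_apery (gluingN_addn a_gt0 b_gt0))).
by rewrite take_trunc_apery_dilate take_mul1BXn_trunc (eq_trunc (PT_mul1BXn S)).
Qed.

Lemma gluing_PT_quotient : exists q : {poly int},
  polyXser q (subst_pow a (PT S1)) = PT S /\
  q`_0 = 1 /\ q \is monic /\ alternating_coefs q.
Proof.
have [C T_cofinite] := gluingN_cofinite a_gt0 b_gt0 coprime_ab S2_ns.
have [q [qE q0 q_monic]] := PT_polynomial _ _ (gluingN0 a_gt0 b_gt0 S2_ns) T_cofinite.
exists q; split; last by split=> //; split=> //; exact: PT_alternating qE.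
apply: functional_extensionality => n.
have := congr1 (fun p : {poly int} => p`_n) (take_poly_PT_gluing n.+1 qE).
by rewrite coef_take_poly coef_trunc ltnSn polyXserE.
Qed.

End GluingSeries.

Theorem corollary6 (S1 S2 : pred nat) (a1 a2 : nat) :
  numerical_semigroup S1 -> numerical_semigroup S2 ->
  (0 < a1)%N -> (0 < a2)%N -> coprime a1 a2 ->
  S1 a2 -> S2 a1 ->
  let S := gluing a1 S1 a2 S2 in
  (exists q : {poly int},
     polyXser q (subst_pow a1 (PT S1)) = PT S /\
     q`_0 = 1 /\ q \is monic /\ alternating_coefs q) /\
  (exists q : {poly int},
     polyXser q (subst_pow a2 (PT S2)) = PT S /\
     q`_0 = 1 /\ q \is monic /\ alternating_coefs q).
Proof.
move=> S1_ns S2_ns a1_gt0 a2_gt0 coprime_a12 S1a2 S2a1 S; split.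
  exact: gluing_PT_quotient.
rewrite /S (eq_PT _ _ (gluingC a1_gt0 a2_gt0)).
by apply: gluing_PT_quotient; rewrite // coprime_sym.
Qed.
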